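(* Let $\lambda=(\lambda_1,\dots,\lambda_n)$ be a composition of $N$ with positive parts and $\lambda_1\le\cdots\le\lambda_n$. Let $0\ne\mu\subseteq\lambda$ with $\ell(\mu)=d_{|\mu|}=:d$, and let $1\le i_1<\cdots<i_d\le n$ be the positions of the non-zero parts of $\mu$. Then for every $w\in S_d$ and every $j=1,\dots,d$ we have $\mu_{i_j}>\lambda_{i_j}-\min(\lambda_{i_{wj}},\lambda_{i_j})$.
   Context: $(d_1,\dots,d_N)$ is the sequence consisting of $\lambda_n$ copies of $1$, followed by $\lambda_{n-1}$ copies of $2$, ..., followed by $\lambda_1$ copies of $n$. For a composition $\mu=(\mu_1,\dots,\mu_n)$, $\mu\subseteq\lambda$ means $0\le\mu_i\le\lambda_i$ for all $i$, $|\mu|=\sum_i\mu_i$, and $\ell(\mu)$ is the number of non-zero parts. *)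

From mathcomp Require Import all_boot all_fingroup.
Set Implicit Arguments. Unset Strict Implicit. Unset Printing Implicit Defensive.

(* Compositions are sequences of naturals; part i (1-based in the paper) is
   nth 0 s (i-1) here (0-based). *)

(* The sequence (d_1,...,d_N): lambda_n copies of 1, lambda_{n-1} copies of 2,
   ..., lambda_1 copies of n.  d_k is [nth 0 (dseq lambda) k.-1]. *)
Definition dseq (lambda : seq nat) : seq nat :=
  let n := size lambda in
  flatten [seq nseq (nth 0 lambda (n - 1 - k)) k.+1 | k <- iota 0 n].

Definition nzpos (mu : seq nat) : seq nat :=
  [seq i <- iota 0 (size mu) | nth 0 mu i != 0].

Definition ell (mu : seq nat) : nat := size (nzpos mu).

(* Write p = i_j and q = i_(wj).  The claim is trivial unless
   lambda_q < lambda_p.  If then mu_p <= lambda_p - lambda_q, bounding mu_q by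
   lambda_q and every other mu_i by lambda_i gives that |mu| is at most the
   sum of lambda over the d - 1 non-zero positions of mu other than q, hence
   at most the sum of the d - 1 largest parts of lambda.  The first d - 1
   blocks of (d_k) have exactly that total length and only contain values
   below d, so d_|mu| < d. *)
From mathcomp Require Import all_boot all_fingroup.
From mathcomp Require Import zify.

Set Implicit Arguments.
Unset Strict Implicit.
Unset Printing Implicit Defensive.

Lemma sumn_gt0 (s : seq nat) : (0 < sumn s) = has (fun x => x != 0) s.
Proof. by elim: s => //= x s IHs; rewrite addn_gt0 IHs lt0n. Qed.

Lemma leq_nth_sorted (l : seq nat) i j :
  sorted leq l -> i <= j -> j < size l -> nth 0 l i <= nth 0 l j.
Proof.
move=> sorted_l le_ij lt_j.
by apply: (sorted_leq_nth leq_trans leqnn) => //; rewrite inE (leq_ltn_trans le_ij).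
Qed.

Lemma sum_uniq_le_top (l t : seq nat) b :
  sorted leq l -> b <= size l -> uniq t -> all (fun i => i < b) t ->
  \sum_(i <- t) nth 0 l i <= \sum_(k < size t) nth 0 l (b - k.+1).
Proof.
move=> sorted_l; elim: b t => [|b IHb] t le_b uniq_t /allP lt_t.
  case: t lt_t {uniq_t} => [|x t] lt_t; first by rewrite big_nil.
  by have := lt_t x (mem_head x t).
have lt_rem x : x \in t -> x != b -> x < b.
  by move=> /lt_t; rewrite ltnS leq_eqVlt => /orP [/eqP -> /eqP|].
have [b_t | b_t] := boolP (b \in t).
  have size_t : size t = (size (rem b t)).+1.
    by rewrite size_rem // prednK // -has_predT; apply/hasP; exists b.
  rewrite (perm_big _ (perm_to_rem b_t)) big_cons size_t big_ord_recl subn1 leq_add2l.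
  apply: leq_trans (IHb _ (ltnW le_b) (rem_uniq _ uniq_t) _) _.
    apply/allP => x; rewrite mem_rem_uniq // inE => /andP [x_b x_t].
    exact: lt_rem.
  by apply: eq_leq; apply: eq_bigr => k _; rewrite /bump /= subSS.
apply: leq_trans (IHb t (ltnW le_b) uniq_t _) _.
  by apply/allP => x x_t; rewrite lt_rem //; apply: contraNneq b_t => <-.
apply: leq_sum => k _; apply: leq_nth_sorted => //; lia.
Qed.

Lemma nth_dseq_le (l : seq nat) m K :
  m <= size l -> K < \sum_(k < m) nth 0 l (size l - k.+1) ->
  nth 0 (dseq l) K <= m.
Proof.
move=> le_m lt_K; rewrite /dseq -(subnKC le_m) iotaD map_cat flatten_cat.
set blocks := flatten _.
have size_blocks : size blocks = \sum_(k < m) nth 0 l (size l - k.+1).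
  rewrite size_flatten /shape -map_comp sumnE big_map.
  rewrite -(big_mkord xpredT (fun k => nth 0 l (size l - k.+1))) /index_iota subn0.
  by apply: eq_bigr => k _; rewrite /= size_nseq subnKC // -subnDA add1n.
rewrite nth_cat size_blocks lt_K.
have : nth 0 blocks K \in blocks by rewrite mem_nth // size_blocks.
case/flattenP => s /mapP [k]; rewrite mem_iota => /andP [_ lt_k] -> /nseqP [-> _].
exact: lt_k.
Qed.

Lemma mem_nzpos (mu : seq nat) i :
  (i \in nzpos mu) = (i < size mu) && (nth 0 mu i != 0).
Proof. by rewrite mem_filter mem_iota andbC. Qed.

Lemma nzpos_uniq (mu : seq nat) : uniq (nzpos mu).
Proof. exact/filter_uniq/iota_uniq. Qed.

Lemma ell_le_size (mu : seq nat) : ell mu <= size mu.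
Proof. by rewrite /ell size_filter (leq_trans (count_size _ _)) ?size_iota. Qed.

Lemma sumn_nzpos (mu : seq nat) : sumn mu = \sum_(i <- nzpos mu) nth 0 mu i.
Proof.
rewrite sumnE (big_nth 0) /index_iota subn0 big_filter.
rewrite [LHS](bigID (fun i => nth 0 mu i != 0)) /= [X in _ + X]big1 ?addn0 //.
by move=> i /negbNE/eqP.
Qed.

Section Exchange.

Variables lambda mu : seq nat.
Hypothesis sorted_lambda : sorted leq lambda.
Hypothesis size_mu : size mu = size lambda.
Hypothesis mu_le_lambda : forall i, nth 0 mu i <= nth 0 lambda i.

Lemma sumn_exchange p q : p \in nzpos mu -> q \in nzpos mu -> p != q ->
  sumn mu + nth 0 lambda p <=
    nth 0 mu p + nth 0 lambda q + \sum_(i <- rem q (nzpos mu)) nth 0 lambda i.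
Proof.
move=> p_nz q_nz neq_pq.
have p_rem : p \in rem q (nzpos mu) by rewrite mem_rem_uniq ?nzpos_uniq // inE neq_pq.
rewrite sumn_nzpos (big_rem _ q_nz) !(big_rem _ p_rem) /=.
have := mu_le_lambda q.
have : \sum_(i <- rem p (rem q (nzpos mu))) nth 0 mu i <=
       \sum_(i <- rem p (rem q (nzpos mu))) nth 0 lambda i.
  by apply: leq_sum => i _.
(* The two copies of each sum differ in how the index type nat is presented,
   so [lia] would see distinct atoms; [set] identifies them. *)
set A := \sum_(i <- _) nth 0 mu i; set B := \sum_(i <- _) nth 0 lambda i.
lia.
Qed.

Lemma sum_rem_nzpos_le_top q : q \in nzpos mu ->
  \sum_(i <- rem q (nzpos mu)) nth 0 lambda i <=
    \sum_(k < (ell mu).-1) nth 0 lambda (size lambda - k.+1).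
Proof.
move=> q_nz; rewrite /ell -(size_rem q_nz).
apply: sum_uniq_le_top => //; first exact/rem_uniq/nzpos_uniq.
by apply/allP => i /mem_rem; rewrite mem_nzpos size_mu => /andP [].
Qed.

Lemma sumn_le_top_parts p q : p \in nzpos mu -> q \in nzpos mu ->
  nth 0 lambda q < nth 0 lambda p ->
  nth 0 mu p <= nth 0 lambda p - nth 0 lambda q ->
  sumn mu <= \sum_(k < (ell mu).-1) nth 0 lambda (size lambda - k.+1).
Proof.
move=> p_nz q_nz lt_qp small_mu_p.
have neq_pq : p != q by apply: contraTneq lt_qp => ->; rewrite ltnn.
have := sumn_exchange p_nz q_nz neq_pq.
have := sum_rem_nzpos_le_top q_nz.
set R := \sum_(i <- _) _; set T := \sum_(k < _) _.
lia.
Qed.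

End Exchange.

Theorem lemma3p8 (lambda mu : seq nat) :
  all (fun x => 0 < x) lambda ->
  sorted leq lambda ->
  size mu = size lambda ->
  (forall i, i < size lambda -> nth 0 mu i <= nth 0 lambda i) ->
  has (fun x => x != 0) mu ->
  ell mu = nth 0 (dseq lambda) (sumn mu).-1 ->
  forall (w : 'S_(ell mu)) (j : 'I_(ell mu)),
    let pj := nth 0 (nzpos mu) j in
    let pwj := nth 0 (nzpos mu) (w j) in
    nth 0 lambda pj - minn (nth 0 lambda pwj) (nth 0 lambda pj) < nth 0 mu pj.
Proof.
(* The parts of lambda need not be positive. *)
move=> _ sorted_lambda size_mu mu_le nz_mu d_ell w j /=.
set p := nth 0 _ j; set q := nth 0 _ (w j).
have p_nz : p \in nzpos mu by rewrite mem_nth.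
have q_nz : q \in nzpos mu by rewrite mem_nth.
have [_ | lt_qp] := leqP (nth 0 lambda p) (nth 0 lambda q).
  by rewrite subnn lt0n; move: p_nz; rewrite mem_nzpos => /andP [].
rewrite ltnNge; apply/negP => small_mu_p.
have mu_le_lambda i : nth 0 mu i <= nth 0 lambda i.
  by case: (ltnP i (size lambda)) => [/mu_le // | ge_i]; rewrite nth_default ?size_mu.
have ell_le : (ell mu).-1 <= size lambda.
  by rewrite -size_mu (leq_trans (leq_pred _)) ?ell_le_size.
have sumn_lt : (sumn mu).-1 < \sum_(k < (ell mu).-1) nth 0 lambda (size lambda - k.+1).
  rewrite prednK ?sumn_gt0 //.
  exact (sumn_le_top_parts sorted_lambda size_mu mu_le_lambda p_nz q_nz lt_qp small_mu_p).
have := nth_dseq_le ell_le sumn_lt; rewrite -d_ell; have := ltn_ord j; lia.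
Qed.
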